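(* (i) For any formula $A\in\mathcal{L}_\infty$ and any natural numbers $m,n$ both strictly greater than the index of every box occurring in $A$, $\mathbf{GL}_h\vdash\Box_mA\leftrightarrow\Box_nA$. (ii) For any formula $A$ of the ordinary unimodal language $\mathcal{L}_\Box$ and any witnesses $u,v$ for $A$, $\mathbf{GL}_h\vdash A(u)\rightarrow A(v)$.
   Context: The language $\mathcal{L}_\infty$ consists of modal formulas built from propositional atoms, $\bot,\top$, the connectives $\neg,\wedge,\vee,\rightarrow$ and unary modalities $\Box_n$ ($n\in\mathbb{N}$), with the restriction that $\Box_n A$ is a formula only if $n$ is strictly greater than the index of every box occurring in $A$. Axiom instances are only those that are $\mathcal{L}_\infty$-formulas. Axiom schemes (for all $n\ge0$): $\mathbf{H}$: $\Box_n A\rightarrow\Box_{n+1}A$; $\mathbf{K}_h$: $\Box_n(A\rightarrow B)\rightarrow(\Box_nA\rightarrow\Box_nB)$; $\mathbf{4}_h$: $\Box_nA\rightarrow\Box_{n+1}\Box_nA$; $\mathbf{L}_h$: $\Box_{n+1}(\Box_nA\rightarrow A)\rightarrow\Box_nA$. $\mathbf{GL}_h$ is the least set of $\mathcal{L}_\infty$-formulas containing all classical propositional tautologies and all instances of $\mathbf{H},\mathbf{K}_h,\mathbf{4}_h,\mathbf{L}_h$, closed under modus ponens and the rule: from $A$ infer $\Box_nA$ for any $n$ greater than all box indices in $A$. $\mathcal{L}_\Box$ is the usual modal language with one modality $\Box$ (same atoms). A witness for $A\in\mathcal{L}_\Box$ is an assignment of a natural number to each occurrence of $\Box$ in $A$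 such that the number assigned to each occurrence is strictly greater than the numbers assigned to all box occurrences inside its scope (formally: atoms have the empty witness $()$; $(w_1,w_2)$ is a witness for $B\circ C$ if $w_1,w_2$ are witnesses for $B,C$; a witness for $B$ is one for $\neg B$; $(n,w)$ is a witness for $\Box B$ if $w$ is a witness for $B$ and $n$ exceeds every number in $w$). For a witness $w$ of $A$, $A(w)\in\mathcal{L}_\infty$ is obtained by replacing each occurrence of $\Box$ by $\Box_n$, where $n$ is the number assigned to that occurrence. *)

From Stdlib Require Import Arith Bool.

Inductive form : Type :=
| Var : nat -> form
| Bot : form
| Top : form
| Neg : form -> form
| And : form -> form -> form
| Or  : form -> form -> form
| Imp : form -> form -> form
| Box : nat -> form -> form.

Fixpoint boxes_below (n : nat) (A : form) : Prop :=
  match A with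
  | Var _ | Bot | Top => True
  | Neg B => boxes_below n B
  | And B C | Or B C | Imp B C => boxes_below n B /\ boxes_below n C
  | Box k B => k < n /\ boxes_below n B
  end.

Fixpoint wf (A : form) : Prop :=
  match A with
  | Var _ | Bot | Top => True
  | Neg B => wf B
  | And B C | Or B C | Imp B C => wf B /\ wf C
  | Box k B => boxes_below k B /\ wf B
  end.

Definition Iff (A B : form) : form := And (Imp A B) (Imp B A).

(* classical propositional evaluation, treating atoms and boxed formulas
   as propositional variables *)
Fixpoint peval (v : form -> bool) (A : form) : bool :=
  match A with
  | Var p => v (Var p)
  | Bot => false
  | Top => true
  | Neg B => negb (peval v B)
  | And B C => peval v B && peval v C
  | Or B C => peval v B || peval v C
  | Imp B C => implb (peval v B) (peval v C)
  | Box k B => v (Box k B)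
  end.

Definition tautology (A : form) : Prop := forall v, peval v A = true.

Inductive GLh : form -> Prop :=
| GLh_taut : forall A, wf A -> tautology A -> GLh A
| GLh_H : forall n A, wf (Imp (Box n A) (Box (S n) A)) ->
    GLh (Imp (Box n A) (Box (S n) A))
| GLh_K : forall n A B,
    wf (Imp (Box n (Imp A B)) (Imp (Box n A) (Box n B))) ->
    GLh (Imp (Box n (Imp A B)) (Imp (Box n A) (Box n B)))
| GLh_4 : forall n A, wf (Imp (Box n A) (Box (S n) (Box n A))) ->
    GLh (Imp (Box n A) (Box (S n) (Box n A)))
| GLh_L : forall n A, wf (Imp (Box (S n) (Imp (Box n A) A)) (Box n A)) ->
    GLh (Imp (Box (S n) (Imp (Box n A) A)) (Box n A))
| GLh_MP : forall A B, GLh A -> GLh (Imp A B) -> GLh B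
| GLh_nec : forall n A, GLh A -> boxes_below n A -> GLh (Box n A).

Inductive uform : Type :=
| UVar : nat -> uform
| UBot : uform
| UTop : uform
| UNeg : uform -> uform
| UAnd : uform -> uform -> uform
| UOr  : uform -> uform -> uform
| UImp : uform -> uform -> uform
| UBox : uform -> uform.

(* witnesses: () , (w1,w2) , (n,w) *)
Inductive wit : Type :=
| WNil : wit
| WPair : wit -> wit -> wit
| WBox : nat -> wit -> wit.

Fixpoint wit_below (n : nat) (w : wit) : Prop :=
  match w with
  | WNil => True
  | WPair w1 w2 => wit_below n w1 /\ wit_below n w2
  | WBox k w' => k < n /\ wit_below n w'
  end.

Fixpoint is_witness (A : uform) (w : wit) : Prop :=
  match A, w with
  | UVar _, WNil | UBot, WNil | UTop, WNil => True
  | UNeg B, _ => is_witness B w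
  | UAnd B C, WPair w1 w2 | UOr B C, WPair w1 w2 | UImp B C, WPair w1 w2 =>
      is_witness B w1 /\ is_witness C w2
  | UBox B, WBox n w' => is_witness B w' /\ wit_below n w'
  | _, _ => False
  end.

(* A(w); junk (Bot) on structurally mismatched witnesses *)
Fixpoint translate (A : uform) (w : wit) : form :=
  match A, w with
  | UVar p, _ => Var p
  | UBot, _ => Bot
  | UTop, _ => Top
  | UNeg B, _ => Neg (translate B w)
  | UAnd B C, WPair w1 w2 => And (translate B w1) (translate C w2)
  | UOr B C, WPair w1 w2 => Or (translate B w1) (translate C w2)
  | UImp B C, WPair w1 w2 => Imp (translate B w1) (translate C w2)
  | UBox B, WBox n w' => Box n (translate B w')
  | _, _ => Bot
  end.

(* For (i): axiom H climbs from [Box m A] to [Box n A] when m <= n.  To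
   descend one step, necessitate the tautology [A -> (Box k A -> A)] at
   level k+1 and distribute with K; the Löb axiom then turns
   [Box (k+1) (Box k A -> A)] into [Box k A].  At a box [Box n A(u)] versus [Box k A(v)], move
   both to level [max n k] by (i) and necessitate the induction hypothesis
   there.  Negation and antecedents of implications are contravariant, so
   the induction hypothesis is used for both orders of the witnesses. *)

From Stdlib Require Import Arith Lia.

Lemma boxes_below_mono (A : form) (m n : nat) :
  boxes_below m A -> m <= n -> boxes_below n A.
Proof.
  induction A; simpl; intuition (eauto; lia).
Qed.

Lemma GLh_wf (A : form) : GLh A -> wf A.
Proof. induction 1; simpl in *; tauto. Qed.

Ltac decide_tautology :=
  let v := fresh "v" in
  intro v; simpl;
  repeat match goal with
  | |- context [peval ?u ?X] => destruct (peval u X)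
  | |- context [?u (Box ?k ?X)] => destruct (u (Box k X))
  | |- context [?u (Var ?p)] => destruct (u (Var p))
  end; reflexivity.

Ltac solve_wf := simpl in *; repeat split; intuition (eauto using boxes_below_mono).

Lemma GLh_mp_taut (X Y : form) :
  GLh X -> wf Y -> tautology (Imp X Y) -> GLh Y.
Proof.
  intros HX HY Htaut. apply (GLh_MP X); [exact HX|].
  apply GLh_taut; [simpl; auto using GLh_wf | exact Htaut].
Qed.

Lemma GLh_mp2_taut (X Y Z : form) :
  GLh X -> GLh Y -> wf Z -> tautology (Imp X (Imp Y Z)) -> GLh Z.
Proof.
  intros HX HY HZ Htaut. apply (GLh_MP Y); [exact HY|].
  apply (GLh_MP X); [exact HX|].
  apply GLh_taut; [simpl; auto using GLh_wf | exact Htaut].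
Qed.

Lemma GLh_imp_refl (X : form) : wf X -> GLh (Imp X X).
Proof. intro HX. apply GLh_taut; [simpl; tauto | decide_tautology]. Qed.

Lemma GLh_imp_trans (X Y Z : form) :
  GLh (Imp X Y) -> GLh (Imp Y Z) -> GLh (Imp X Z).
Proof.
  intros HXY HYZ. pose proof (GLh_wf _ HXY). pose proof (GLh_wf _ HYZ).
  apply (GLh_mp2_taut _ _ _ HXY HYZ); [solve_wf | decide_tautology].
Qed.

Lemma GLh_iff_intro (X Y : form) :
  GLh (Imp X Y) -> GLh (Imp Y X) -> GLh (Iff X Y).
Proof.
  intros HXY HYX. pose proof (GLh_wf _ HXY).
  apply (GLh_mp2_taut _ _ _ HXY HYX); [solve_wf | decide_tautology].
Qed.

Lemma GLh_neg_anti (X Y : form) :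
  GLh (Imp X Y) -> GLh (Imp (Neg Y) (Neg X)).
Proof.
  intro HXY. pose proof (GLh_wf _ HXY).
  apply (GLh_mp_taut _ _ HXY); [solve_wf | decide_tautology].
Qed.

Lemma GLh_and_mono (X X' Y Y' : form) :
  GLh (Imp X X') -> GLh (Imp Y Y') -> GLh (Imp (And X Y) (And X' Y')).
Proof.
  intros HX HY. pose proof (GLh_wf _ HX). pose proof (GLh_wf _ HY).
  apply (GLh_mp2_taut _ _ _ HX HY); [solve_wf | decide_tautology].
Qed.

Lemma GLh_or_mono (X X' Y Y' : form) :
  GLh (Imp X X') -> GLh (Imp Y Y') -> GLh (Imp (Or X Y) (Or X' Y')).
Proof.
  intros HX HY. pose proof (GLh_wf _ HX). pose proof (GLh_wf _ HY).
  apply (GLh_mp2_taut _ _ _ HX HY); [solve_wf | decide_tautology].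
Qed.

Lemma GLh_imp_mono (X X' Y Y' : form) :
  GLh (Imp X' X) -> GLh (Imp Y Y') -> GLh (Imp (Imp X Y) (Imp X' Y')).
Proof.
  intros HX HY. pose proof (GLh_wf _ HX). pose proof (GLh_wf _ HY).
  apply (GLh_mp2_taut _ _ _ HX HY); [solve_wf | decide_tautology].
Qed.

Lemma GLh_box_mono (n : nat) (X Y : form) :
  GLh (Imp X Y) -> boxes_below n (Imp X Y) -> GLh (Imp (Box n X) (Box n Y)).
Proof.
  intros HXY Hn. pose proof (GLh_wf _ HXY).
  apply (GLh_MP _ _ (GLh_nec n _ HXY Hn)), GLh_K. solve_wf.
Qed.

Lemma GLh_box_up (A : form) (m n : nat) :
  wf A -> boxes_below m A -> m <= n -> GLh (Imp (Box m A) (Box n A)).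
Proof.
  intros HA Hm Hle. induction Hle as [|n Hle IH].
  - apply GLh_imp_refl. solve_wf.
  - apply (GLh_imp_trans _ _ _ IH), GLh_H. solve_wf; lia.
Qed.

Lemma GLh_box_pred (A : form) (k : nat) :
  wf A -> boxes_below k A -> GLh (Imp (Box (S k) A) (Box k A)).
Proof.
  intros HA Hk.
  assert (HSk : boxes_below (S k) A) by eauto using boxes_below_mono.
  assert (Hcond : GLh (Imp A (Imp (Box k A) A)))
    by (apply GLh_taut; [solve_wf | decide_tautology]).
  apply (GLh_imp_trans _ _ _ (GLh_box_mono (S k) _ _ Hcond ltac:(solve_wf))).
  apply GLh_L. solve_wf.
Qed.

Lemma GLh_box_down (A : form) (m n : nat) :
  wf A -> boxes_below m A -> m <= n -> GLh (Imp (Box n A) (Box m A)).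
Proof.
  intros HA Hm Hle. induction Hle as [|n Hle IH].
  - apply GLh_imp_refl. solve_wf.
  - refine (GLh_imp_trans _ _ _ _ IH).
    apply GLh_box_pred; eauto using boxes_below_mono.
Qed.

Lemma GLh_box_index_iff (A : form) (m n : nat) :
  wf A -> boxes_below m A -> boxes_below n A -> GLh (Iff (Box m A) (Box n A)).
Proof.
  intros HA Hm Hn. destruct (le_ge_dec m n) as [Hle | Hge].
  - apply GLh_iff_intro; [apply GLh_box_up | apply GLh_box_down]; assumption.
  - apply GLh_iff_intro; [apply GLh_box_down | apply GLh_box_up]; assumption.
Qed.

Lemma GLh_box_reindex (X Y : form) (n k : nat) :
  GLh (Imp X Y) -> boxes_below n X -> boxes_below k Y ->
  GLh (Imp (Box n X) (Box k Y)).
Proof.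
  intros HXY Hn Hk. pose proof (GLh_wf _ HXY) as [HX HY].
  apply (GLh_imp_trans _ (Box (Nat.max n k) X)); [apply GLh_box_up; auto; lia|].
  apply (GLh_imp_trans _ (Box (Nat.max n k) Y)); [|apply GLh_box_down; auto; lia].
  apply GLh_box_mono; [exact HXY | split; eapply boxes_below_mono; eauto; lia].
Qed.

Lemma translate_boxes_below (A : uform) (w : wit) (n : nat) :
  is_witness A w -> wit_below n w -> boxes_below n (translate A w).
Proof.
  revert w; induction A; intros w Hw Hn; simpl in *;
    [| | | now apply IHA | ..]; destruct w; simpl in *; intuition.
Qed.

Lemma GLh_translate_imp (A : uform) (u v : wit) :
  is_witness A u -> is_witness A v -> GLh (Imp (translate A u) (translate A v)).
Proof.
  revert u v; induction A as [p | | | A IH | A IHA B IHB | A IHA B IHB | A IHA B IHB | A IH];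
    intros u v Hu Hv; simpl in Hu, Hv.
  1-3: apply GLh_imp_refl; exact I.
  1: apply GLh_neg_anti, IH; assumption.
  all: destruct u, v; try contradiction; destruct Hu, Hv; simpl.
  - apply GLh_and_mono; [apply IHA | apply IHB]; assumption.
  - apply GLh_or_mono; [apply IHA | apply IHB]; assumption.
  - apply GLh_imp_mono; [apply IHA | apply IHB]; assumption.
  - apply GLh_box_reindex; auto using translate_boxes_below.
Qed.

Theorem lemma3p12 :
  (forall (A : form) (m n : nat), wf A -> boxes_below m A -> boxes_below n A ->
     GLh (Iff (Box m A) (Box n A))) /\
  (forall (A : uform) (u v : wit), is_witness A u -> is_witness A v ->
     GLh (Imp (translate A u) (translate A v))).
Proof.
  split; [exact GLh_box_index_iff | exact GLh_translate_imp].
Qed.
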